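(* Let $\mathcal{D}=M_{n_1}(\mathbb{C})\oplus\cdots\oplus M_{n_k}(\mathbb{C})$, let $\mathcal{A}\subseteq\mathcal{D}$ be a CSL subalgebra, and let $\mathcal{B}$ be a complex algebra containing $\mathcal{D}$ as a subalgebra with the same unit $I$. If $\delta:\mathcal{A}\to\mathcal{B}$ is a linear map with $(m+n+l)\delta(A^2)=m\delta(A)A+nA\delta(A)+lA\delta(I)A$ for all $A\in\mathcal{A}$, then $\delta(AB)=\delta(A)B=A\delta(B)$ for all $A,B\in\mathcal{A}$.
   Context: Fixed integers $m,n,l\ge 0$ satisfy $m+l\ge1$ and $n+l\ge1$. A CSL subalgebra of $\mathcal{D}$ is a subalgebra of the form $\mathrm{alg}\mathcal{L}$ for a commutative lattice $\mathcal{L}$ of projections in the diagonal of $\mathcal{D}$ (with respect to a fixed system of matrix units); in particular it contains all diagonal matrix units $E_{ii}$ and is the linear span of the matrix units $E_{ij}$ it contains. *)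

From HB Require Import structures.
From mathcomp Require Import all_boot all_order all_algebra.
Set Implicit Arguments. Unset Strict Implicit. Unset Printing Implicit Defensive.
Import Order.TTheory GRing.Theory Num.Theory.
Local Open Scope ring_scope.

(* D = M_{n_1} (+) ... (+) M_{n_k}, realised inside 'M_N (N = n_1+...+n_k)
   as the block-diagonal matrices w.r.t. the block assignment
   blk : 'I_N -> 'I_k (index i lies in block blk i; n_j = #{i | blk i = j}).
   The matrix units of D are the E_ij with blk i = blk j. *)
Definition blockD (F : fieldType) (N k : nat) (blk : 'I_N -> 'I_k) :
    pred 'M[F]_N :=
  fun A => [forall i, forall j, (blk i != blk j) ==> (A i j == 0)].

Definition dproj (F : fieldType) (N : nat) (S : {set 'I_N}) : 'M[F]_N :=
  \matrix_(i, j) ((i == j) && (i \in S))%:R.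

Definition is_proj_lattice (N : nat) (L : {set {set 'I_N}}) : Prop :=
  [/\ set0 \in L, setT \in L,
      {in L &, forall S T, S :|: T \in L} &
      {in L &, forall S T, S :&: T \in L}].

Definition algL (F : fieldType) (N k : nat) (blk : 'I_N -> 'I_k)
    (L : {set {set 'I_N}}) : pred 'M[F]_N :=
  fun A => blockD blk A &&
    [forall S in L, dproj F S *m A *m dproj F S == A *m dproj F S].

Definition unital_subalg_embedding (F : fieldType) (B : algType F)
    (N : nat) (D : pred 'M[F]_N) (phi : 'M[F]_N -> B) : Prop :=
  [/\ {in D &, forall X Y, forall a : F, phi (a *: X + Y) = a *: phi X + phi Y},
      {in D &, forall X Y, phi (X *m Y) = phi X * phi Y},
      phi 1%:M = 1 &
      {in D &, injective phi}].

From HB Require Import structures.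
From mathcomp Require Import all_boot all_order all_algebra.
Import Order.TTheory GRing.Theory Num.Theory.
Set Implicit Arguments. Unset Strict Implicit. Unset Printing Implicit Defensive.
Local Open Scope ring_scope.

(* Write t = delta(I).  The theorem says that delta is "left
   multiplication by t" on alg L and that t commutes with alg L; call an
   element Z standard when delta Z = t phi(Z) and phi(Z) t = t phi(Z).

   1. Ring lemma (Peirce decomposition).  If u is idempotent and d satisfies
      (m+n+l) d = m d u + n u d + l u t u, multiplying by u and 1-u on both
      sides kills the off-diagonal corners of d and its (1-u)-corner, up to
      the factors m+l, n+l, m+n+l, which are nonzero and cancellable in a
      vector space over a field of characteristic 0.  Applying this to
      delta(U) and delta(I-U) for an idempotent U, whose sum is t, shows that
      every idempotent of alg L is standard.
   2. Matrix lemma.  alg L is spanned by its matrix units E_ij (those with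
      E_ij in alg L), and each of them is a linear combination of the
      idempotents E_ii and E_ii + E_ij.
   3. Standardness is stable under linear combinations, so every element of
      alg L is standard, and the product formulas follow at once.
   The argument only uses that alg L is spanned by matrix units. *)

Definition nat_torsion_free (V : zmodType) : Prop :=
  forall (x : V) (k : nat), (0 < k)%N -> x *+ k = 0 -> x = 0.

Lemma lmod_nat_torsion_free (F : numFieldType) (V : lmodType F) :
  nat_torsion_free V.
Proof.
move=> x k k_gt0 /eqP; rewrite -scaler_nat scaler_eq0 pnatr_eq0.
by rewrite eqn0Ngt k_gt0 => /eqP.
Qed.

Lemma comb_map0 (R : pzRingType) (V W : lmodType R) (f : V -> W) :
  f (1 *: 0 + 0) = 1 *: f 0 + f 0 -> f 0 = 0.
Proof. by rewrite !scale1r addr0 -{1}[f 0]addr0 => /addrI. Qed.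

Section PeirceCorners.
Variables (R : pzRingType) (m n l : nat).

(* The defining identity of the theorem at an element u, with d standing for
   delta(u^2) = delta(u) when u is idempotent and t for delta(I). *)
Definition jordan_at (d t u : R) : Prop :=
  d *+ (m + n + l) = (d * u) *+ m + (u * d) *+ n + (u * t * u) *+ l.

Lemma mulrn_addn_cancel (x : R) (a b : nat) : x *+ (a + b) = x *+ a -> x *+ b = 0.
Proof. by rewrite mulrnDr -{2}[x *+ a]addr0 => /addrI. Qed.

Lemma jordan_corners (u d t : R) : u * u = u -> jordan_at d t u ->
  [/\ (u * d * (1 - u)) *+ (m + l) = 0, ((1 - u) * d * u) *+ (n + l) = 0
    & ((1 - u) * d * (1 - u)) *+ (m + n + l) = 0].
Proof.
move=> uu H; pose v := 1 - u.
have uv : u * v = 0 by rewrite mulrBr mulr1 uu subrr.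
have vu : v * u = 0 by rewrite mulrBl mul1r uu subrr.
have xuv x : x * u * v = 0 by rewrite -mulrA uv mulr0.
have xuu x : x * u * u = x * u by rewrite -mulrA uu.
rewrite -/v; clearbody v.
split.
- have := congr1 (fun z => u * z * v) H => /=.
  rewrite !mulrDr !mulrDl !mulrnAr !mulrnAl !mulrA uu !xuv !mul0rn add0r addr0.
  by rewrite addnAC addnC; exact: mulrn_addn_cancel.
- have := congr1 (fun z => v * z * u) H => /=.
  rewrite !mulrDr !mulrDl !mulrnAr !mulrnAl !mulrA !xuu vu !mul0r !mul0rn !addr0.
  by rewrite -addnA; exact: mulrn_addn_cancel.
- have := congr1 (fun z => v * z * v) H => /=.
  by rewrite !mulrDr !mulrDl !mulrnAr !mulrnAl !mulrA vu !xuv !mul0r !mul0rn !addr0.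
Qed.

Lemma jordan_corners_vanish (u d t : R) :
  nat_torsion_free R -> (1 <= m + l)%N -> (1 <= n + l)%N ->
  u * u = u -> jordan_at d t u ->
  [/\ u * d * (1 - u) = 0, (1 - u) * d * u = 0 & (1 - u) * d * (1 - u) = 0].
Proof.
move=> tf hml hnl uu /(jordan_corners uu) [uv vu vv].
have hmnl : (0 < m + n + l)%N by rewrite -addnA (leq_trans hnl) ?leq_addl.
by split; [exact: tf uv | exact: tf vu | exact: tf vv].
Qed.

Lemma jordan_idempotent_pair (u dU dV t : R) :
  nat_torsion_free R -> (1 <= m + l)%N -> (1 <= n + l)%N -> u * u = u ->
  jordan_at dU t u -> jordan_at dV t (1 - u) -> dU + dV = t ->
  dU = t * u /\ u * t = t * u.
Proof.
move=> tf hml hnl uu HU HV dUV.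
have vv : (1 - u) * (1 - u) = 1 - u.
  by rewrite mulrBr mulr1 mulrBl mul1r uu subrr subr0.
have [uUv vUu vUv] := jordan_corners_vanish tf hml hnl uu HU.
have [vVu uVv uVu] := jordan_corners_vanish tf hml hnl vv HV.
rewrite subKr in vVu uVv uVu.
pose v := 1 - u; rewrite -/v in uUv vUu vUv vVu uVv uVu.
have uv1 : u + v = 1 by rewrite addrC subrK.
clearbody v.
have dUe : dU = u * dU * u.
  have e : dU = (u + v) * dU * (u + v) by rewrite uv1 mul1r mulr1.
  by rewrite {1}e !mulrDr !mulrDl ?mulrA uUv vUu vUv !addr0.
have ut : u * t = u * dU * u.
  have -> : u * t = u * (dU + dV) * (u + v) by rewrite uv1 mulr1 dUV.
  by rewrite !mulrDr !mulrDl ?mulrA uUv uVv uVu !addr0.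
have tu : t * u = u * dU * u.
  have -> : t * u = (u + v) * (dU + dV) * u by rewrite uv1 mul1r dUV.
  by rewrite !mulrDr !mulrDl ?mulrA vUu vVu uVu !addr0.
by rewrite ut tu -dUe.
Qed.
End PeirceCorners.

Section CSLAlgebra.
Variables (F : fieldType) (N k : nat) (blk : 'I_N -> 'I_k) (L : {set {set 'I_N}}).
Local Notation algA := (@algL F N k blk L).

(* unit_in i j: the matrix unit E_ij lies in alg L, i.e. i and j are in the
   same block of D and every projection of L containing j contains i.  This
   is a preorder on the indices. *)
Definition unit_in (i j : 'I_N) : bool :=
  (blk i == blk j) && [forall S in L, (j \in S) ==> (i \in S)].

Lemma unit_in_refl i : unit_in i i.
Proof. by rewrite /unit_in eqxx; apply/forallP => S; rewrite implybb implybT. Qed.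

Lemma unit_in_trans i j h : unit_in i j -> unit_in j h -> unit_in i h.
Proof.
case/andP=> /eqP bij /forallP Sij /andP [/eqP bjh /forallP Sjh].
rewrite /unit_in bij bjh eqxx; apply/forallP => S; apply/implyP => SL.
move: (Sij S) (Sjh S); rewrite SL /= => /implyP Sij' /implyP Sjh'.
by apply/implyP => /Sjh' /Sij'.
Qed.

Lemma mul_dproj_mx (S : {set 'I_N}) (A : 'M[F]_N) i j :
  (dproj F S *m A) i j = (i \in S)%:R * A i j.
Proof.
rewrite !mxE (bigD1 i) //= big1 ?addr0; first by rewrite mxE eqxx.
by move=> h /negbTE hi; rewrite mxE eq_sym hi mul0r.
Qed.

Lemma mulmx_dproj (S : {set 'I_N}) (A : 'M[F]_N) i j :
  (A *m dproj F S) i j = A i j * (j \in S)%:R.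
Proof.
rewrite !mxE (bigD1 j) //= big1 ?addr0; first by rewrite mxE eqxx.
by move=> h /negbTE hj; rewrite mxE hj mulr0.
Qed.

Lemma algLP (A : 'M[F]_N) :
  reflect (forall i j, A i j != 0 -> unit_in i j) (algA A).
Proof.
apply: (iffP andP) => [[/forallP hD /forallP hS] i j Aij | H].
  apply/andP; split.
    by apply: contraR Aij => bij; move/forallP/(_ j)/implyP: (hD i) => ->.
  apply/forallP => S; apply/implyP => SL; apply/implyP => jS.
  move: (hS S); rewrite SL /= => /eqP/matrixP/(_ i j).
  rewrite !mulmx_dproj mul_dproj_mx jS !mulr1.
  by case: (i \in S) => //; rewrite mul0r => /esym/eqP; rewrite (negbTE Aij).
split.
  apply/forallP => i; apply/forallP => j; apply/implyP => bij.
  by apply: contraR bij => /H /andP [].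
apply/forallP => S; apply/implyP => SL; apply/eqP/matrixP => i j.
rewrite !mulmx_dproj mul_dproj_mx.
have [->|/H /andP [_ /forallP /(_ S)]] := eqVneq (A i j) 0.
  by rewrite !mulr0 !mul0r.
rewrite SL /= => /implyP hij.
by case jS: (j \in S); [rewrite hij // mul1r | rewrite !mulr0].
Qed.

Lemma algL_blockD (A : 'M[F]_N) : algA A -> blockD blk A.
Proof. by case/andP. Qed.

Lemma algL_unit i j : unit_in i j -> algA (delta_mx i j).
Proof.
move=> ij; apply/algLP => a b; rewrite mxE.
by case: (a == i) / eqP => [-> | _]; case: (b == j) / eqP => [-> | _]; rewrite ?eqxx.
Qed.

Lemma algL0 : algA 0.
Proof. by apply/algLP => i j; rewrite mxE eqxx. Qed.

Lemma algL1 : algA 1%:M.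
Proof.
apply/algLP => i j; rewrite mxE.
by case: (i == j) / eqP => [-> _ | _]; [exact: unit_in_refl | rewrite eqxx].
Qed.

Lemma algL_comb (a : F) (X Y : 'M[F]_N) :
  algA X -> algA Y -> algA (a *: X + Y).
Proof.
move=> /algLP hX /algLP hY; apply/algLP => i j; rewrite !mxE.
by have [-> | /hX //] := eqVneq (X i j) 0; rewrite mulr0 add0r => /hY.
Qed.

Lemma algL_mul (X Y : 'M[F]_N) : algA X -> algA Y -> algA (X *m Y).
Proof.
move=> /algLP hX /algLP hY; apply/algLP => i j; rewrite !mxE.
apply: contraR => nij; apply/eqP/big1 => h _.
have [-> | /hX ih] := eqVneq (X i h) 0; first by rewrite mul0r.
have [-> | /hY hj] := eqVneq (Y h j) 0; first by rewrite mulr0.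
by case/negP: nij; apply: unit_in_trans ih hj.
Qed.

Lemma algL_span_ind (P : 'M[F]_N -> Prop) :
  P 0 ->
  (forall (a : F) X Y, algA X -> algA Y -> P X -> P Y -> P (a *: X + Y)) ->
  (forall i j, unit_in i j -> P (delta_mx i j)) ->
  forall X, algA X -> P X.
Proof.
move=> P0 Pcomb Punit X /algLP hX; have A0 := algL0.
suff [] : algA (\sum_(i < N) \sum_(j < N) X i j *: delta_mx i j) /\
          P (\sum_(i < N) \sum_(j < N) X i j *: delta_mx i j).
  by rewrite -matrix_sum_delta.
have Padd Z W : algA Z /\ P Z -> algA W /\ P W -> algA (Z + W) /\ P (Z + W).
  by move=> [AZ PZ] [AW PW]; rewrite -[Z]scale1r; split; [exact: algL_comb | exact: Pcomb].
apply: (big_ind _ _ Padd) => // i _; apply: (big_ind _ _ Padd) => // j _.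
have [-> | /hX ij] := eqVneq (X i j) 0; first by rewrite scale0r.
rewrite -[_ *: _]addr0; have Aij := algL_unit ij.
split; first exact: algL_comb.
by apply: Pcomb => //; exact: Punit.
Qed.

End CSLAlgebra.

Section JordanDerivation.
Variables (F : numClosedFieldType) (m n l : nat).
Hypotheses (hml : (1 <= m + l)%N) (hnl : (1 <= n + l)%N).
Variables (N k : nat) (blk : 'I_N -> 'I_k) (L : {set {set 'I_N}}).
Variables (B : algType F) (phi : 'M[F]_N -> B) (delta : 'M[F]_N -> B).
Hypothesis hphi : unital_subalg_embedding (blockD blk) phi.
Hypothesis hlin : {in algL blk L &, forall X Y, forall a : F,
  delta (a *: X + Y) = a *: delta X + delta Y}.
Hypothesis heq : {in algL blk L, forall X,
  delta (X *m X) *+ (m + n + l)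
  = (delta X * phi X) *+ m + (phi X * delta X) *+ n
    + (phi X * delta 1%:M * phi X) *+ l}.

Local Notation algA := (@algL F N k blk L).
Local Notation t := (delta 1%:M).

Lemma phi_comb : {in algA &, forall X Y, forall a : F,
  phi (a *: X + Y) = a *: phi X + phi Y}.
Proof. by case: hphi => hpl _ _ _ X Y /algL_blockD hX /algL_blockD hY; apply: hpl. Qed.

Lemma phi_mul : {in algA &, forall X Y, phi (X *m Y) = phi X * phi Y}.
Proof. by case: hphi => _ hpm _ _ X Y /algL_blockD hX /algL_blockD hY; apply: hpm. Qed.

Lemma jordan_at_idem (U : 'M[F]_N) : algA U -> U *m U = U ->
  jordan_at m n l (delta U) t (phi U).
Proof. by move=> AU UU; rewrite /jordan_at -heq ?UU. Qed.

Definition standard_at (Z : 'M[F]_N) : Prop :=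
  delta Z = t * phi Z /\ phi Z * t = t * phi Z.

Lemma standard_comb (a : F) (Z W : 'M[F]_N) : algA Z -> algA W ->
  standard_at Z -> standard_at W -> standard_at (a *: Z + W).
Proof.
move=> AZ AW [dZ cZ] [dW cW]; rewrite /standard_at hlin // phi_comb // dZ dW.
by rewrite mulrDr mulrDl -scalerAl -scalerAr cZ cW scalerAr.
Qed.

(* Every idempotent U of alg L is standard: apply jordan_idempotent_pair to
   the complementary idempotents phi U and phi (I - U). *)
Lemma standard_idem (U : 'M[F]_N) : algA U -> U *m U = U -> standard_at U.
Proof.
move=> AU UU; have phi1 : phi 1%:M = 1 by case: hphi.
have eV : 1%:M - U = (-1) *: U + 1%:M by rewrite scaleN1r addrC.
have AV : algA (1%:M - U) by rewrite eV algL_comb ?algL1.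
have VV : (1%:M - U) *m (1%:M - U) = 1%:M - U.
  by rewrite mulmxBl mul1mx mulmxBr mulmx1 UU subrr subr0.
have phiUV : phi U + phi (1%:M - U) = 1.
  by rewrite -[phi U]scale1r -phi_comb // scale1r addrC subrK; exact: phi1.
have phiV : phi (1%:M - U) = 1 - phi U by rewrite -phiUV [phi U + _]addrC addrK.
have dUV : delta U + delta (1%:M - U) = t.
  by rewrite -[delta U]scale1r -hlin // scale1r addrC subrK.
have phiUU : phi U * phi U = phi U by rewrite -phi_mul ?UU.
have := jordan_at_idem AV VV; rewrite phiV => JV.
apply: (jordan_idempotent_pair _ hml hnl phiUU (jordan_at_idem AU UU) JV dUV).
exact: lmod_nat_torsion_free.
Qed.

(* Matrix units of alg L are standard: E_ij = -E_ii + (E_ii + E_ij), where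
   E_ii and E_ii + E_ij (for i != j) are idempotents of alg L. *)
Lemma standard_unit i j : unit_in blk L i j -> standard_at (delta_mx i j).
Proof.
move=> ij; have Aii := algL_unit F (unit_in_refl blk L i).
have [<- | nij] := eqVneq i j; first exact: standard_idem Aii (mul_delta_mx _ _ _).
pose U : 'M[F]_N := delta_mx i i + delta_mx i j.
have AU : algA U by rewrite /U -[delta_mx i i]scale1r algL_comb // algL_unit.
have UU : U *m U = U.
  by rewrite /U mulmxDl !mulmxDr !mul_delta_mx !mul_delta_mx_0 ?addr0 // eq_sym.
have -> : delta_mx i j = (-1) *: delta_mx i i + U by rewrite /U scaleN1r addKr.
have Pii := standard_idem Aii (mul_delta_mx _ _ _).
exact: standard_comb Aii AU Pii (standard_idem AU UU).
Qed.

Lemma standard_all (X : 'M[F]_N) : algA X -> standard_at X.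
Proof.
apply: algL_span_ind; [| exact: standard_comb | exact: standard_unit].
have alg0 : algA 0 by exact: algL0.
have phi0 : phi 0 = 0 by apply: comb_map0; exact: (phi_comb alg0 alg0 1).
have delta0 : delta 0 = 0 by apply: comb_map0; exact: (hlin alg0 alg0 1).
by rewrite /standard_at phi0 delta0 mulr0 mul0r.
Qed.

Lemma jordan_derivation_product : {in algA &, forall X Y,
  delta (X *m Y) = delta X * phi Y /\ delta (X *m Y) = phi X * delta Y}.
Proof.
move=> X Y AX AY.
have [dX cX] := standard_all AX; have [dY _] := standard_all AY.
have [dXY _] := standard_all (algL_mul AX AY).
by rewrite dXY phi_mul // dX dY !mulrA cX.
Qed.
End JordanDerivation.

Theorem lemma3p7 (F : numClosedFieldType) (m n l : nat)
    (hml : (1 <= m + l)%N) (hnl : (1 <= n + l)%N)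
    (N k : nat) (blk : 'I_N -> 'I_k) (L : {set {set 'I_N}})
    (hL : is_proj_lattice L)
    (B : algType F) (phi : 'M[F]_N -> B)
    (hphi : unital_subalg_embedding (blockD blk) phi)
    (delta : 'M[F]_N -> B)
    (hlin : {in algL blk L &, forall X Y, forall a : F,
               delta (a *: X + Y) = a *: delta X + delta Y})
    (heq : {in algL blk L, forall X,
               delta (X *m X) *+ (m + n + l)
               = (delta X * phi X) *+ m + (phi X * delta X) *+ n
                 + (phi X * delta 1%:M * phi X) *+ l}) :
  {in algL blk L &, forall X Y,
      delta (X *m Y) = delta X * phi Y /\ delta (X *m Y) = phi X * delta Y}.
Proof. exact: (jordan_derivation_product (delta := delta) hml hnl hphi hlin heq). Qed.
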